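(* A completely simple semigroup $S=(G,P,\Lambda,I)$ is an equational domain in the language $\mathcal{L}_S=\{\cdot,{}^{-1}\}\cup\{s\mid s\in S\}$ if and only if both of the following hold: (1) the sandwich matrix $P$ is non-singular; (2) the structural group $G$ is an equational domain in the group language $\mathcal{L}_G$.
   Context: Rees representation: a completely simple semigroup $S=(G,P,\Lambda,I)$ is given by a group $G$ (structural group), index sets $\Lambda,I$ (each containing an element $1$), and a matrix $P=(p_{i\lambda})_{i\in I,\lambda\in\Lambda}$ over $G$ (sandwich matrix) normalised so that $p_{1\lambda}=p_{i1}=1_G$; elements are triples $(\lambda,g,i)$ with product $(\lambda,g,i)(\mu,h,j)=(\lambda,gp_{i\mu}h,j)$ and inversion $(\lambda,g,i)^{-1}=(\lambda,p_{i\lambda}^{-1}g^{-1}p_{i\lambda}^{-1},i)$. $P$ is non-singular if it has no two equal rows and no two equal columns. The language $\mathcal{L}_S$ has a constant for each element of $S$; the group language $\mathcal{L}_G$ is $\{\cdot,{}^{-1},1\}$ plus a constant for each element of $G$. An equation is an equality of two terms; a system is a set of equations; an algebraic set is the solution set of a system; a structure is an equational domain (e.d.) if every finite union of algebraic sets is algebraic. *)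

From mathcomp Require Import all_boot.
Set Implicit Arguments. Unset Strict Implicit. Unset Printing Implicit Defensive.

Record AbsGroup := {
  gcar :> Type;
  gmul : gcar -> gcar -> gcar;
  ginv : gcar -> gcar;
  gone : gcar;
  gmulA : forall x y z, gmul x (gmul y z) = gmul (gmul x y) z;
  gmul1l : forall x, gmul gone x = x;
  gmul1r : forall x, gmul x gone = x;
  gmulVl : forall x, gmul (ginv x) x = gone;
  gmulVr : forall x, gmul x (ginv x) = gone
}.

Section Generic.
Variable A : Type.
Variable Tm : nat -> Type.
Variable ev : forall n, Tm n -> ('I_n -> A) -> A.

Definition solution_set n (Sys : Tm n * Tm n -> Prop) : ('I_n -> A) -> Prop :=
  fun x => forall e, Sys e -> ev e.1 x = ev e.2 x.

Definition algebraic n (Y : ('I_n -> A) -> Prop) : Prop :=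
  exists Sys : Tm n * Tm n -> Prop, forall x, Y x <-> solution_set Sys x.

Definition equational_domain : Prop :=
  forall (n m : nat) (Y : 'I_m.+1 -> ('I_n -> A) -> Prop),
    (forall k, algebraic (Y k)) ->
    algebraic (fun x => exists k, Y k x).
End Generic.

Inductive gterm (G : Type) (n : nat) : Type :=
  | GVar of 'I_n
  | GCst of G
  | GOne
  | GMul of gterm G n & gterm G n
  | GInv of gterm G n.

Fixpoint geval (G : AbsGroup) n (t : gterm G n) (x : 'I_n -> G) : G :=
  match t with
  | GVar i => x i
  | GCst c => c
  | GOne => gone G
  | GMul t1 t2 => gmul (geval t1 x) (geval t2 x)
  | GInv t1 => ginv (geval t1 x)
  end.

Definition group_ed (G : AbsGroup) : Prop :=
  equational_domain (@geval G).

Inductive sterm (S : Type) (n : nat) : Type :=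
  | SVar of 'I_n
  | SCst of S
  | SMul of sterm S n & sterm S n
  | SInv of sterm S n.

Fixpoint seval (S : Type) (mul : S -> S -> S) (inv : S -> S) n
    (t : sterm S n) (x : 'I_n -> S) : S :=
  match t with
  | SVar i => x i
  | SCst c => c
  | SMul t1 t2 => mul (seval mul inv t1 x) (seval mul inv t2 x)
  | SInv t1 => inv (seval mul inv t1 x)
  end.

Section Rees.
Variables (G : AbsGroup) (Lam I : Type) (P : I -> Lam -> G).

Definition rees_car : Type := (Lam * G * I)%type.

Definition rees_mul (a b : rees_car) : rees_car :=
  let: (l, g, i) := a in let: (m, h, j) := b in
  (l, gmul (gmul g (P i m)) h, j).

Definition rees_inv (a : rees_car) : rees_car :=
  let: (l, g, i) := a in
  (l, gmul (gmul (ginv (P i l)) (ginv g)) (ginv (P i l)), i).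

Definition rees_ed : Prop :=
  equational_domain (@seval rees_car rees_mul rees_inv).

Definition normalised (l1 : Lam) (i1 : I) : Prop :=
  (forall l, P i1 l = gone G) /\ (forall i, P i l1 = gone G).

Definition nonsingular : Prop :=
  (forall i j : I, (forall l, P i l = P j l) -> i = j) /\
  (forall l m : Lam, (forall i, P i l = P i m) -> l = m).
End Rees.

From mathcomp Require Import all_boot.
From Stdlib Require Import Classical IndefiniteDescription.
Set Implicit Arguments. Unset Strict Implicit. Unset Printing Implicit Defensive.

(* If two columns [l], [m] of [P] coincide, then [a = (l, 1, i)] and [b = (m, 1, i)]
   are indistinguishable by terms except through the [Lam]-component of a value,
   which is that of the leftmost variable or constant; hence any equation true at
   [(a, b)] and [(b, a)] is true at [(a, a)], and the union of these two points is
   not algebraic.  Rows are symmetric.  The structural group is the maximal subgroup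
   [H_{1 1} = {(1, g, 1)}], which is algebraic ([x = e x e]) and on which [S]-terms
   reduce to [G]-terms, so finite unions transfer from [H_{1 1}] to [G].
   Conversely, for non-singular [P] the maps [a |-> (1, 1, j) a (m, 1, 1)] into
   [H_{1 1}] jointly separate points, so "some equation [t1 = t2] of some system
   holds" becomes "some coordinate pair of a point of [G^(2k)] coincides", an
   algebraic condition when [G] is an equational domain. *)


Section GroupFacts.
Variable G : AbsGroup.

Lemma ginv1 : ginv (gone G) = gone G.
Proof. by rewrite -[ginv _](@gmul1l G) gmulVr. Qed.

Lemma gmulI (g : G) : injective (gmul g).
Proof.
by move=> a b h; rewrite -[a](@gmul1l G) -(@gmulVl G g) -gmulA h gmulA gmulVl gmul1l.
Qed.

Lemma gmulIg (g : G) : injective ((@gmul G)^~ g).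
Proof.
by move=> a b /= h; rewrite -[a](@gmul1r G) -(@gmulVr G g) gmulA h -gmulA gmulVr gmul1r.
Qed.

End GroupFacts.

Lemma algebraic_ext (A : Type) (Tm : nat -> Type) (ev : forall n, Tm n -> ('I_n -> A) -> A)
    n (Y Y' : ('I_n -> A) -> Prop) :
  (forall x, Y x <-> Y' x) -> algebraic ev Y -> algebraic ev Y'.
Proof. by move=> YY' [Sys hSys]; exists Sys => x; rewrite -YY'. Qed.

Lemma union_solution_sets (A : Type) (Tm : nat -> Type)
    (ev : forall n, Tm n -> ('I_n -> A) -> A) n m (Sys : 'I_m.+1 -> Tm n * Tm n -> Prop) x :
  (exists k, solution_set ev (Sys k) x) <->
  forall c : 'I_m.+1 -> Tm n * Tm n,
    (forall k, Sys k (c k)) -> exists k, ev _ (c k).1 x = ev _ (c k).2 x.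
Proof.
split=> [[k xk] c c_in | all_c]; first by exists k; apply: xk.
apply: NNPP => no_k.
have fails k : exists e, Sys k e /\ ev _ e.1 x <> ev _ e.2 x.
  apply: NNPP => hk; apply: no_k; exists k => e e_in.
  by apply: NNPP => ne; apply: hk; exists e.
have [c hc] := functional_choice _ fails.
by have [k] := all_c c (fun k => proj1 (hc k)); apply: (proj2 (hc k)).
Qed.

Section TermAlgebra.
Variables (S : Type) (mul : S -> S -> S) (inv : S -> S).
Local Notation sev := (seval mul inv).
Local Notation algebraicS := (algebraic (@seval S mul inv)).

Lemma point_algebraic n (p : 'I_n -> S) : algebraicS (fun x => forall v, x v = p v).
Proof.
exists (fun e => exists v, e = (SVar S v, SCst n (p v))) => x; split.
- by move=> xp e [v ->] /=.
- by move=> xp v; apply: (xp _ (ex_intro _ v erefl)).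
Qed.

Section Congruence.
Variables (R : S -> S -> Prop) (X : Type) (pr : S -> X).
Hypotheses (R_refl : forall a, R a a) (R_sym : forall a b, R a b -> R b a)
  (R_trans : forall a b c, R a b -> R b c -> R a c).
Hypothesis R_mul : forall a a' b b', R a a' -> R b b' -> R (mul a b) (mul a' b').
Hypothesis R_inv : forall a a', R a a' -> R (inv a) (inv a').
Hypothesis R_pr_inj : forall a b, R a b -> pr a = pr b -> a = b.
Hypothesis pr_mul : (forall a b, pr (mul a b) = pr a) \/ (forall a b, pr (mul a b) = pr b).
Hypothesis pr_inv : forall a, pr (inv a) = pr a.

Lemma seval_congr n (t : sterm S n) x y :
  (forall v, R (x v) (y v)) -> R (sev t x) (sev t y).
Proof. by move=> xy; elim: t => [v|c|a iha b ihb|a iha] /=; auto. Qed.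

Lemma pr_seval_head n (t : sterm S n) :
  (exists v, forall x, pr (sev t x) = pr (x v)) \/ (exists c, forall x, pr (sev t x) = pr c).
Proof.
elim: t => [v|c|a iha b ihb|a iha] /=.
- by left; exists v.
- by right; exists c.
- by case: pr_mul => prM; [move: iha | move: ihb] => -[[w hw]|[c hc]];
    [left; exists w | right; exists c | left; exists w | right; exists c] => x;
    rewrite prM.
- by case: iha => [[w hw]|[c hc]]; [left; exists w | right; exists c] => x; rewrite pr_inv.
Qed.

(* Every equation holding at both [(a, b)] and [(b, a)] also holds at [(a, a)]:
   [pr] of a term value is read off a single variable or constant, and R-classes
   are separated by [pr]. *)
Lemma congr_trivial_of_ed : equational_domain (@seval S mul inv) ->
  forall a b, R a b -> a = b.
Proof.
move=> hed a b ab.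
pose pab (v : 'I_2) := if v == ord0 then a else b.
pose pba (v : 'I_2) := if v == ord0 then b else a.
pose pk (k : 'I_2) := if k == ord0 then pab else pba.
have [Sys hSys] := hed 2 1 (fun k x => forall v, x v = pk k v)
  (fun k => point_algebraic (pk k)).
have Sab : solution_set sev Sys pab by apply/hSys; exists ord0.
have Sba : solution_set sev Sys pba by apply/hSys; exists ord_max.
have Saa : solution_set sev Sys (fun _ => a).
  move=> [t1 t2] /= e_in.
  have e_ab := Sab _ e_in; have e_ba := Sba _ e_in; rewrite /= in e_ab e_ba.
  have a_pab v : R a (pab v) by rewrite /pab; case: (v == ord0).
  apply: R_pr_inj.
    apply: R_trans (seval_congr t1 a_pab) _; rewrite e_ab.
    exact/R_sym/(seval_congr t2 a_pab).
  have a_in v : pab v = a \/ pba v = a by rewrite /pab /pba; case: (v == ord0); auto.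
  case: (pr_seval_head t1) => [[v hv]|[c hc]];
    case: (pr_seval_head t2) => [[w hw]|[d hd]]; rewrite ?hv ?hw ?hc ?hd //.
  + move: (hv pab) (hv pba); rewrite e_ab e_ba !hd.
    by case: (a_in v) => -> ? ?; congruence.
  + move: (hw pab) (hw pba); rewrite -e_ab -e_ba !hc.
    by case: (a_in w) => -> ? ?; congruence.
  + by rewrite -(hc pab) -(hd pab) e_ab.
have [k hk] := proj2 (hSys _) Saa.
move: (hk ord0) (hk ord_max); rewrite /pk /pab /pba.
by case: (k == ord0) => /=.
Qed.

End Congruence.
End TermAlgebra.

Section Rees.
Variables (G : AbsGroup) (Lam Ix : Type) (P : Ix -> Lam -> G).

Local Notation S := (rees_car G Lam Ix).
Local Notation mul := (rees_mul P).
Local Notation inv := (rees_inv P).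
Local Notation sev := (seval mul inv).

Definition col_equiv (a b : S) :=
  [/\ a.1.2 = b.1.2, a.2 = b.2 & forall i, P i a.1.1 = P i b.1.1].

Definition row_equiv (a b : S) :=
  [/\ a.1.1 = b.1.1, a.1.2 = b.1.2 & forall l, P a.2 l = P b.2 l].

Lemma rees_ed_col_equiv : rees_ed P -> forall a b, col_equiv a b -> a = b.
Proof.
apply: (congr_trivial_of_ed (pr := fun a : S => a.1.1)).
- by move=> a; split.
- by move=> a b [? ? ?]; split.
- by move=> a b c [? ? ab] [? ? bc]; split; congruence.
- move=> [[l g] i] [[l' g'] i'] [[m h] j] [[m' h'] j'] [/= <- <- Pl] [/= <- <- Pm].
  by split=> //=; rewrite Pm.
- by move=> [[l g] i] [[l' g'] i'] [/= <- <- Pl]; split=> //=; rewrite Pl.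
- by move=> [[l g] i] [[l' g'] i'] [/= <- <- _] /= ->.
- by left; move=> [[? ?] ?] [[? ?] ?].
- by move=> [[? ?] ?].
Qed.

Lemma rees_ed_row_equiv : rees_ed P -> forall a b, row_equiv a b -> a = b.
Proof.
apply: (congr_trivial_of_ed (pr := fun a : S => a.2)).
- by move=> a; split.
- by move=> a b [? ? ?]; split.
- by move=> a b c [? ? ab] [? ? bc]; split; congruence.
- move=> [[l g] i] [[l' g'] i'] [[m h] j] [[m' h'] j'] [/= <- <- Pi] [/= <- <- Pj].
  by split=> //=; rewrite Pi.
- by move=> [[l g] i] [[l' g'] i'] [/= <- <- Pi]; split=> //=; rewrite Pi.
- by move=> [[l g] i] [[l' g'] i'] [/= <- <- _] /= ->.
- by right; move=> [[? ?] ?] [[? ?] ?].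
- by move=> [[? ?] ?].
Qed.

Lemma nonsingular_of_rees_ed (l1 : Lam) (i1 : Ix) : rees_ed P -> nonsingular P.
Proof.
move=> hed; split.
- move=> i j Pij.
  have [] : (l1, gone G, i) = (l1, gone G, j) :> S by apply: rees_ed_row_equiv.
  done.
- move=> l m Plm.
  have [] : (l, gone G, i1) = (m, gone G, i1) :> S by apply: rees_ed_col_equiv.
  done.
Qed.

Section Embedding.
Variables (l1 : Lam) (i1 : Ix).
Hypothesis hP : normalised P l1 i1.

Local Notation GEV := (@geval G).
Local Notation SEV := (@seval S mul inv).

Definition emb (g : G) : S := (l1, g, i1).

Definition emb_image n (Y : ('I_n -> G) -> Prop) (x : 'I_n -> S) : Prop :=
  (forall v, x v = emb (x v).1.2) /\ Y (fun v => (x v).1.2).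

(* On points of [H_{1 1}], the outer components of a term value do not depend
   on the point, and its group component is the value of a group term. *)
Fixpoint sterm_lam n (t : sterm S n) : Lam :=
  match t with
  | SVar _ => l1 | SCst c => c.1.1 | SMul a _ => sterm_lam a | SInv a => sterm_lam a
  end.

Fixpoint sterm_idx n (t : sterm S n) : Ix :=
  match t with
  | SVar _ => i1 | SCst c => c.2 | SMul _ b => sterm_idx b | SInv a => sterm_idx a
  end.

Fixpoint gterm_of_sterm n (t : sterm S n) : gterm G n :=
  match t with
  | SVar v => GVar G v
  | SCst c => GCst n c.1.2
  | SMul a b => GMul (GMul (gterm_of_sterm a) (GCst n (P (sterm_idx a) (sterm_lam b))))
                     (gterm_of_sterm b)
  | SInv a => let p := GInv (GCst n (P (sterm_idx a) (sterm_lam a))) in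
              GMul (GMul p (GInv (gterm_of_sterm a))) p
  end.

Lemma seval_emb n (t : sterm S n) (y : 'I_n -> G) :
  sev t (fun v => emb (y v)) = (sterm_lam t, geval (gterm_of_sterm t) y, sterm_idx t).
Proof.
by elim: t => [v|[[l g] i]|a iha b ihb|a iha] //=; rewrite ?iha ?ihb.
Qed.

(* A nonempty trace on [H_{1 1}] forces every equation of the system to have
   matching outer components, so only its group components constrain points. *)
Lemma algebraic_emb_preimage n (Z : ('I_n -> S) -> Prop) :
  algebraic SEV Z -> (exists y0, Z (fun v => emb (y0 v))) ->
  algebraic GEV (fun y => Z (fun v => emb (y v))).
Proof.
move=> [Sys hSys] [y0 Zy0].
exists (fun e' => exists e, Sys e /\ e' = (gterm_of_sterm e.1, gterm_of_sterm e.2)) => y.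
have outer e : Sys e -> sterm_lam e.1 = sterm_lam e.2 /\ sterm_idx e.1 = sterm_idx e.2.
  by move=> /(proj1 (hSys _) Zy0); rewrite !seval_emb => -[-> _ ->].
rewrite hSys; split.
- by move=> Sy _ [e [e_in ->]] /=; move: (Sy e e_in); rewrite !seval_emb => -[].
- move=> Sy e e_in; have [lam_eq idx_eq] := outer e e_in.
  by rewrite !seval_emb lam_eq idx_eq (Sy _ (ex_intro _ e (conj e_in erefl))).
Qed.

Fixpoint sterm_of_gterm n N (f : 'I_N -> sterm S n) (t : gterm G N) : sterm S n :=
  match t with
  | GVar v => f v
  | GCst c => SCst n (emb c)
  | GOne => SCst n (emb (gone G))
  | GMul a b => SMul (sterm_of_gterm f a) (sterm_of_gterm f b)
  | GInv a => SInv (sterm_of_gterm f a)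
  end.

Lemma seval_sterm_of_gterm n N (f : 'I_N -> sterm S n) x (y : 'I_N -> G) :
  (forall v, sev (f v) x = emb (y v)) ->
  forall t, sev (sterm_of_gterm f t) x = emb (geval t y).
Proof.
move=> fy; elim=> [v|c||a iha b ihb|a iha] //=.
- by rewrite iha ihb /emb /= (proj2 hP) gmul1r.
- by rewrite iha /emb /= (proj2 hP) ginv1 gmul1l gmul1r.
Qed.

Lemma emb_sandwich (a : S) : mul (mul (emb (gone G)) a) (emb (gone G)) = emb a.1.2.
Proof. by case: a => [[l g] i]; rewrite /= (proj1 hP) (proj2 hP) !gmul1l !gmul1r. Qed.

(* [x_v = e x_v e] with [e = (l1, 1, i1)] cuts out [H_{1 1}]. *)
Lemma algebraic_emb_image n (Y : ('I_n -> G) -> Prop) :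
  algebraic GEV Y -> algebraic SEV (emb_image Y).
Proof.
move=> [Sys hSys].
pose e1 := SCst n (emb (gone G)).
pose trans := sterm_of_gterm (fun v : 'I_n => SVar S v).
exists (fun e => (exists s, Sys s /\ e = (trans s.1, trans s.2))
          \/ (exists v, e = (SVar S v, SMul (SMul e1 (SVar S v)) e1))) => x.
have in_H_eval : (forall v, x v = emb (x v).1.2) ->
    forall t, sev (trans t) x = emb (geval t (fun v => (x v).1.2)).
  by move=> xH; apply: seval_sterm_of_gterm.
split.
- move=> [xH Yx] e [[s [s_in ->]]|[v ->]] /=; last by rewrite emb_sandwich.
  by rewrite !in_H_eval // (proj1 (hSys _) Yx s s_in).
- move=> Sx.
  have xH v : x v = emb (x v).1.2.
    by have := Sx _ (or_intror (ex_intro _ v erefl)); rewrite /= emb_sandwich.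
  split=> //; apply/hSys => s s_in.
  have := Sx _ (or_introl (ex_intro _ s (conj s_in erefl))).
  by rewrite /= !in_H_eval // => -[].
Qed.

Lemma group_ed_of_rees_ed : rees_ed P -> group_ed G.
Proof.
move=> hed n m Y hY.
pose Z x := exists k, emb_image (Y k) x.
have Z_alg : algebraic SEV Z by apply: hed => k; apply: algebraic_emb_image.
have [[y0 [k0 Yy0]]|Yempty] := classic (exists y k, Y k y).
- apply: algebraic_ext (algebraic_emb_preimage Z_alg _); last by exists y0, k0.
  by move=> y; split=> -[k Yk]; exists k => //; case: Yk.
- apply: algebraic_ext (hY ord0) => y; split; first by exists ord0.
  by move=> [k Yk]; case: Yempty; exists y, k.
Qed.

Definition probe (jm : Ix * Lam) (a : S) : G :=
  (mul (mul (l1, gone G, jm.1) a) (jm.2, gone G, i1)).1.2.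

Definition probe_term n (jm : Ix * Lam) (t : sterm S n) : sterm S n :=
  SMul (SMul (SCst n (l1, gone G, jm.1)) t) (SCst n (jm.2, gone G, i1)).

Lemma seval_probe_term n jm (t : sterm S n) x :
  sev (probe_term jm t) x = emb (probe jm (sev t x)).
Proof. by rewrite /probe /=; case: (sev t x) => [[l g] i]. Qed.

(* [probe (j, m) (l, g, i) = p_{j l} g p_{i m}]; the probes with [m = 1], resp.
   [j = 1], recover the column [l], resp. the row [i], of [P]. *)
Lemma probe_inj : nonsingular P -> forall a b, (forall jm, probe jm a = probe jm b) -> a = b.
Proof.
move=> [rows_inj cols_inj] [[la ga] ia] [[lb gb] ib] ab.
have pab j m : gmul (gmul (P j la) ga) (P ia m) = gmul (gmul (P j lb) gb) (P ib m).
  by have := ab (j, m); rewrite /probe /= !gmul1l !gmul1r.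
have gab : ga = gb by have := pab i1 l1; rewrite !(proj1 hP) !(proj2 hP) !gmul1l !gmul1r.
subst gb.
have -> : la = lb.
  by apply: cols_inj => j; apply: (@gmulIg G ga); have := pab j l1; rewrite !(proj2 hP) !gmul1r.
have -> : ia = ib.
  by apply: rows_inj => m; apply: (@gmulI G ga); have := pab i1 m; rewrite !(proj1 hP) !gmul1l.
done.
Qed.

Section Probes.
Variable m : nat.

Definition diag_meets (y : 'I_(m.+1 + m.+1) -> G) : Prop :=
  exists k, y (lshift m.+1 k) = y (rshift m.+1 k).

Lemma algebraic_diag_meets : group_ed G -> algebraic GEV diag_meets.
Proof.
move=> ged; apply: ged => k.
exists (fun e => e = (GVar G (lshift m.+1 k), GVar G (rshift m.+1 k))) => y.
by split=> [yk _ -> // | y_sol]; exact: (y_sol _ erefl).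
Qed.

Definition probe_vec (u : 'I_m.+1 -> S * S) (jm : 'I_m.+1 -> Ix * Lam)
    (v : 'I_(m.+1 + m.+1)) : G :=
  match split v with
  | inl k => probe (jm k) (u k).1
  | inr k => probe (jm k) (u k).2
  end.

Lemma probe_vec_lshift u jm k : probe_vec u jm (lshift m.+1 k) = probe (jm k) (u k).1.
Proof. by rewrite /probe_vec (unsplitK (inl k)). Qed.

Lemma probe_vec_rshift u jm k : probe_vec u jm (rshift m.+1 k) = probe (jm k) (u k).2.
Proof. by rewrite /probe_vec (unsplitK (inr k)). Qed.

Lemma exists_eq_iff_probes (u : 'I_m.+1 -> S * S) : nonsingular P ->
  (exists k, (u k).1 = (u k).2) <-> forall jm, diag_meets (probe_vec u jm).
Proof.
move=> ns; split=> [[k uk] jm | all_jm].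
  by exists k; rewrite probe_vec_lshift probe_vec_rshift uk.
apply: NNPP => no_k.
have separated k : exists jm, probe jm (u k).1 <> probe jm (u k).2.
  apply: NNPP => hk; apply: no_k; exists k; apply: probe_inj => // jm.
  by apply: NNPP => ne; apply: hk; exists jm.
have [jm hjm] := functional_choice _ separated.
have [k] := all_jm jm; rewrite probe_vec_lshift probe_vec_rshift.
exact: hjm.
Qed.

End Probes.

Lemma rees_ed_of_nonsingular : nonsingular P -> group_ed G -> rees_ed P.
Proof.
move=> ns ged n m Y hY.
have [Sys hSys] := functional_choice _ hY.
have [Sg hSg] := algebraic_diag_meets m ged.
pose u (c : 'I_m.+1 -> sterm S n * sterm S n) (x : 'I_n -> S) k : S * S :=
  (sev (c k).1 x, sev (c k).2 x).
pose terms (c : 'I_m.+1 -> sterm S n * sterm S n) jm (v : 'I_(m.+1 + m.+1)) :=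
  match split v with
  | inl k => probe_term (jm k) (c k).1
  | inr k => probe_term (jm k) (c k).2
  end.
have terms_eval c jm x v : sev (terms c jm v) x = emb (probe_vec (u c x) jm v).
  by rewrite /terms /probe_vec; case: (split v) => k; apply: seval_probe_term.
exists (fun e => exists c jm s, (forall k, Sys k (c k)) /\ Sg s /\
          e = (sterm_of_gterm (terms c jm) s.1, sterm_of_gterm (terms c jm) s.2)) => x.
have -> : (exists k, Y k x) <-> exists k, solution_set SEV (Sys k) x.
  by split=> -[k]; exists k; apply/hSys.
rewrite union_solution_sets; split.
- move=> all_c _ [c [jm [s [c_in [s_in ->]]]]] /=.
  have /hSg Sg_u := proj1 (exists_eq_iff_probes (u c x) ns) (all_c c c_in) jm.
  by rewrite !(seval_sterm_of_gterm (terms_eval c jm x)) (Sg_u s s_in).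
- move=> Sx c c_in; apply/(exists_eq_iff_probes (u c x) ns) => jm; apply/hSg => s s_in.
  have := Sx _ (ex_intro _ c (ex_intro _ jm (ex_intro _ s (conj c_in (conj s_in erefl))))).
  by rewrite /= !(seval_sterm_of_gterm (terms_eval c jm x)) => -[].
Qed.

End Embedding.
End Rees.

Theorem mainTheorem7 (G : AbsGroup) (Lam Ix : Type) (l1 : Lam) (i1 : Ix)
    (P : Ix -> Lam -> G) (hP : normalised P l1 i1) :
  rees_ed P <-> (nonsingular P /\ group_ed G).
Proof.
split=> [hed | [ns ged]].
- split; [exact: nonsingular_of_rees_ed hed | exact: group_ed_of_rees_ed hP hed].
- exact: rees_ed_of_nonsingular hP ns ged.
Qed.
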